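(* Let $P\in I(\mathcal{S})$ be defined by $P(\sigma,\pi)=\binom{\pi}{\sigma}$. For all $\sigma,\pi\in\mathcal{S}$ and every integer $d$ (for $d<0$, $P^d=(P^{-1})^{-d}$; $P^0=\delta$), $$P^d(\sigma,\pi)=d^{|\pi|-|\sigma|}P(\sigma,\pi),$$ with the convention $0^0=1$.
   Context: $\mathcal{S}=\bigcup_{n\ge0}\mathcal{S}_n$ where $\mathcal{S}_n$ is the set of permutations of $[n]$ written as words; $|\pi|$ is the length. For $\sigma\in\mathcal{S}_k$, $\pi\in\mathcal{S}_n$, $\binom{\pi}{\sigma}$ is the number of order-preserving injections $\varphi:[k]\to[n]$ such that $\pi(\varphi(1))\cdots\pi(\varphi(k))$ is order-isomorphic to $\sigma$ (i.e. $\pi(\varphi(i))<\pi(\varphi(j))\iff\sigma(i)<\sigma(j)$). $\mathcal{S}$ is ordered by $\sigma\le\pi$ iff $\binom{\pi}{\sigma}>0$. $I(\mathcal{S})$ is its incidence algebra over $\mathbb{Q}$ with convolution $(FG)(x,y)=\sum_{x\le z\le y}F(x,z)G(z,y)$ and identity $\delta(x,y)=[x=y]$. *)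

From HB Require Import structures.
From mathcomp Require Import all_boot all_order all_algebra.
Set Implicit Arguments. Unset Strict Implicit. Unset Printing Implicit Defensive.
Import Order.TTheory GRing.Theory Num.Theory.
Local Open Scope ring_scope.

Definition is_perm (s : seq nat) : bool := perm_eq s (iota 1 (size s)).

Definition perms (n : nat) : seq (seq nat) := permutations (iota 1 n).

(* All subsequences of s, listed with multiplicity: one entry per subset of
   positions (i.e. per order-preserving injection). *)
Fixpoint subseqs (s : seq nat) : seq (seq nat) :=
  match s with
  | [::] => [:: [::]]
  | x :: s' => map (cons x) (subseqs s') ++ subseqs s'
  end.

Definition order_iso (t u : seq nat) : bool :=
  (size t == size u) &&
  [forall i : 'I_(size t), forall j : 'I_(size t),
     (nth 0 t i < nth 0 t j)%N == (nth 0 u i < nth 0 u j)%N].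

(* binom pi sigma : number of occurrences of sigma in pi. *)
Definition occ (sigma pi : seq nat) : nat := count (order_iso^~ sigma) (subseqs pi).

Definition patle (sigma pi : seq nat) : bool := (0 < occ sigma pi)%N.

Definition incfun := seq nat -> seq nat -> rat.

Definition idelta : incfun := fun x y => (x == y)%:R.

(* convolution: sum over z in S with x <= z <= y (such z have |z| <= |y|) *)
Definition conv (F G : incfun) : incfun := fun x y =>
  \sum_(n < (size y).+1) \sum_(z <- perms n | patle x z && patle z y) F x z * G z y.

(* Inverse in the incidence algebra (for F with F(x,x) invertible), defined by
   the standard recursion  sum_{x<=z<=y} F(x,z) G(z,y) = delta(x,y),
   by recursion on fuel >= |y| - |x|. *)
Fixpoint inv_aux (F : incfun) (k : nat) (x y : seq nat) : rat :=
  if x == y then (F x x)^-1 else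
  match k with
  | 0 => 0
  | k'.+1 => - (F x x)^-1 *
      \sum_(n < (size y).+1)
        \sum_(z <- perms n | patle x z && patle z y && (z != x))
          F x z * inv_aux F k' z y
  end.

Definition inv (F : incfun) : incfun := fun x y => inv_aux F (size y - size x) x y.

Definition ipow (F : incfun) (d : int) : incfun :=
  match d with
  | Posz n => iter n (conv F) idelta
  | Negz n => iter n.+1 (conv (inv F)) idelta
  end.

Definition Pmat : incfun := fun sigma pi => (occ sigma pi)%:R.

(* Weight the pattern matrix as P_a(x, y) = a^(|y| - |x|) P(x, y).  An
   occurrence s of z in y together with an occurrence of x in z is the same as
   a pair of nested subsequences t of s of y with t order-isomorphic to x, since
   each subsequence s of a permutation standardizes to exactly one permutation z.
   Summing over z and applying the binomial theorem to the choice of s between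
   t and y gives P_a P_c = P_(a+c).  Hence P^n = P_n, and P_1 P_(-1) = P_0 =
   delta identifies the inverse of P with P_(-1), so P^(-n) = P_(-n). *)
From Pilot Require Import Defs.
From HB Require Import structures.
From mathcomp Require Import all_boot all_algebra.
From mathcomp Require Import ring zify.
Set Implicit Arguments. Unset Strict Implicit. Unset Printing Implicit Defensive.
Import GRing.Theory.

Lemma order_isoP (t u : seq nat) :
  reflect (size t = size u /\ forall i j, i < size t -> j < size t ->
             (nth 0 t i < nth 0 t j) = (nth 0 u i < nth 0 u j))
          (order_iso t u).
Proof.
apply: (iffP andP) => [[/eqP st_u /forallP tu]|[st_u tu]]; split => //.
- by move=> i j ti tj; exact: (eqP (forallP (tu (Ordinal ti)) (Ordinal tj))).
- by apply/eqP.
- by apply/forallP => i; apply/forallP => j; apply/eqP; apply: tu.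
Qed.

Lemma order_iso_refl t : order_iso t t.
Proof. by apply/order_isoP; split. Qed.

Lemma order_iso_size t u : order_iso t u -> size t = size u.
Proof. by case/order_isoP. Qed.

Lemma order_iso_map (f : nat -> nat) t u :
  {in t &, forall v w, (f v < f w) = (v < w)} ->
  order_iso (map f t) u = order_iso t u.
Proof.
move=> f_mono; apply/order_isoP/order_isoP => -[st_u tu]; split.
- by rewrite -st_u size_map.
- by move=> i j ti tj; rewrite -tu ?size_map // !(nth_map 0) // f_mono // mem_nth.
- by rewrite size_map.
- move=> i j; rewrite size_map => ti tj.
  by rewrite -tu ?size_map // !(nth_map 0) // f_mono // mem_nth.
Qed.

Lemma subseqs_subseq s t : t \in subseqs s -> subseq t s.
Proof.
elim: s t => [|v s IH] t; first by rewrite inE => /eqP ->.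
rewrite /= mem_cat => /orP [/mapP [t' t's ->]|ts].
  by rewrite /= eqxx; apply: IH.
exact: subseq_trans (IH _ ts) (subseq_cons s v).
Qed.

Lemma size_subseqs s t : t \in subseqs s -> size t <= size s.
Proof. by move/subseqs_subseq/size_subseq. Qed.

Lemma subseqs_map (f : nat -> nat) s :
  subseqs (map f s) = map (map f) (subseqs s).
Proof. by elim: s => [|v s IH] //=; rewrite IH map_cat -!map_comp. Qed.

Lemma count_subseqs_size (p : pred (seq nat)) s :
  count (fun t => p t && (size t == size s)) (subseqs s) = p s.
Proof.
elim: s p => [|v s IH] p /=; first by rewrite andbT addn0.
rewrite count_cat count_map -[RHS](IH (fun t => p (v :: t))).
rewrite [X in _ + X](@eq_in_count _ _ pred0) ?count_pred0 ?addn0 // => t /size_subseqs.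
by rewrite /= -ltnS => /ltn_eqF ->; rewrite andbF.
Qed.

Lemma occ_eq0 x y : size y < size x -> occ x y = 0.
Proof.
move=> yx; apply/eqP; rewrite -leqn0 leqNgt -has_count.
apply/hasP => -[t ty /order_iso_size tx].
by move: (size_subseqs ty); rewrite tx leqNgt yx.
Qed.

Lemma occ_same_size x y : size y = size x -> occ x y = order_iso y x.
Proof.
move=> yx; rewrite /occ -(count_subseqs_size (order_iso^~ x) y).
apply: eq_in_count => t _ /=.
by case tx: (order_iso t x); rewrite // (order_iso_size tx) yx eqxx.
Qed.

Lemma occ_id x : occ x x = 1.
Proof. by rewrite occ_same_size // order_iso_refl. Qed.

Lemma patle_size x y : patle x y -> size x <= size y.
Proof.
rewrite /patle /occ -has_count => /hasP [t ty /order_iso_size <-].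
exact: size_subseqs.
Qed.

Definition rank (s : seq nat) (v : nat) : nat := count (fun u => u < v) s.

Definition std (s : seq nat) : seq nat := [seq (rank s v).+1 | v <- s].

Lemma size_std s : size (std s) = size s.
Proof. exact: size_map. Qed.

Lemma rank_lt_size s v : v \in s -> rank s v < size s.
Proof.
move=> sv; rewrite -(count_predC (fun u => u < v) s) -{1}[rank s v]addn0 ltn_add2l.
by rewrite -has_count; apply/hasP; exists v; rewrite //= ltnn.
Qed.

Lemma ltn_rank s v w : v \in s -> (rank s v < rank s w) = (v < w).
Proof.
move=> sv; case: (ltnP v w) => [vw|wv]; last first.
  by apply/negbTE; rewrite -leqNgt; apply: sub_count => u /= uw; apply: leq_trans uw wv.
have split_w : rank s w = rank s v + count (fun u => v <= u < w) s.
  rewrite /rank -count_predUI (@eq_count _ (predI _ _) pred0) ?count_pred0 ?addn0.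
    by apply: eq_count => u /=; lia.
  by move=> u /=; lia.
rewrite split_w -{1}[rank s v]addn0 ltn_add2l -has_count.
by apply/hasP; exists v; rewrite //= leqnn.
Qed.

Lemma std_iso s : order_iso s (std s).
Proof.
apply/order_isoP; split; first by rewrite size_std.
by move=> i j si sj; rewrite !(nth_map 0) // ltnS ltn_rank // mem_nth.
Qed.

Lemma occ_std x s : occ x (std s) = occ x s.
Proof.
rewrite /occ /std subseqs_map count_map; apply: eq_in_count => t ts /=.
apply: order_iso_map => v w tv _; rewrite ltnS ltn_rank //.
exact: mem_subseq (subseqs_subseq ts) _ tv.
Qed.

Lemma std_order_iso s z : order_iso s z -> std s = std z.
Proof.
case/order_isoP => sz sz_lt.
have std_nth u : std u = [seq (count (fun j => nth 0 u j < nth 0 u i)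
                                (iota 0 (size u))).+1 | i <- iota 0 (size u)].
  rewrite /std -[X in map _ X](mkseq_nth 0 u) /mkseq -map_comp /=.
  apply: eq_map => i /=.
  by rewrite /rank -[in LHS](mkseq_nth 0 u) count_map mkseq_nth.
rewrite !std_nth -sz; apply/eq_in_map => i; rewrite mem_iota add0n => si.
by congr _.+1; apply: eq_in_count => j; rewrite mem_iota add0n => sj; apply: sz_lt.
Qed.

Lemma std_perm s : uniq s -> is_perm (std s).
Proof.
move=> s_uniq; have std_uniq : uniq (std s).
  rewrite map_inj_in_uniq // => v w sv sw [] rank_vw.
  case: (ltngtP v w) => // [vw|wv].
    by move: (ltn_rank w sv); rewrite rank_vw ltnn vw.
  by move: (ltn_rank v sw); rewrite rank_vw ltnn wv.
have std_sub : {subset std s <= iota 1 (size (std s))}.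
  by move=> _ /mapP [v sv ->]; rewrite mem_iota size_std add1n !ltnS rank_lt_size.
have [_ std_eq] := uniq_min_size std_uniq std_sub (eq_leq (size_iota 1 _)).
exact: uniq_perm std_uniq (iota_uniq _ _) std_eq.
Qed.

Lemma is_perm_uniq y : is_perm y -> uniq y.
Proof. by move=> y_perm; rewrite (perm_uniq y_perm) iota_uniq. Qed.

Lemma perms_is_perm m z : z \in perms m -> is_perm z.
Proof.
rewrite mem_permutations => zm; have := perm_size zm.
by rewrite size_iota /is_perm => ->.
Qed.

Lemma size_perms m z : z \in perms m -> size z = m.
Proof. by rewrite mem_permutations => /perm_size; rewrite size_iota. Qed.

Lemma mem_perms m x : is_perm x -> (x \in perms m) = (m == size x).
Proof.
move=> x_perm; apply/idP/eqP => [/size_perms -> //|->].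
by rewrite /perms mem_permutations.
Qed.

Lemma rank_iota m v : rank (iota 1 m) v = minn m v.-1.
Proof.
elim: m => [|m IH]; first by rewrite min0n.
by rewrite /rank -[m.+1]addn1 iotaD count_cat -/(rank _ v) IH /= add1n; lia.
Qed.

Lemma std_id z : is_perm z -> std z = z.
Proof.
move=> z_perm; apply: map_id_in => v zv /=.
have : v \in iota 1 (size z) by rewrite -(perm_mem z_perm).
by rewrite /rank (permP z_perm) -/(rank _ v) rank_iota mem_iota; lia.
Qed.

Lemma order_iso_std s z : uniq s -> is_perm z -> order_iso s z = (z == std s).
Proof.
move=> s_uniq z_perm; apply/idP/eqP => [/std_order_iso ->|->].
  by rewrite std_id.
exact: std_iso.
Qed.

Lemma order_iso_perm s z : is_perm s -> is_perm z -> order_iso s z = (s == z).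
Proof.
by move=> s_perm z_perm; rewrite order_iso_std ?is_perm_uniq // std_id // eq_sym.
Qed.

Local Open Scope ring_scope.

Lemma natr_count (R : pzSemiRingType) (T : Type) (p : pred T) (l : seq T) :
  (count p l)%:R = \sum_(v <- l) (p v)%:R :> R.
Proof. by elim: l => [|v l IH]; rewrite ?big_nil // big_cons /= natrD IH. Qed.

Lemma occ_weighted (R : pzSemiRingType) (g : nat -> R) x s :
  (occ x s)%:R * g (size x) = \sum_(t <- subseqs s) (order_iso t x)%:R * g (size t).
Proof.
rewrite natr_count mulr_suml; apply: eq_bigr => t _.
by case tx: (order_iso t x); rewrite ?mul0r // (order_iso_size tx).
Qed.

Lemma subseqs_sum (R : comPzRingType) (h : seq nat -> R) (a c : R) y :
  \sum_(s <- subseqs y) \sum_(t <- subseqs s)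
      h t * a ^+ (size s - size t) * c ^+ (size y - size s)
  = \sum_(t <- subseqs y) h t * (a + c) ^+ (size y - size t).
Proof.
elim: y h => [|v y IH] h; first by rewrite /= !big_seq1 /= !expr0 !mulr1.
set S := fun h' => \sum_(s <- subseqs y) \sum_(t <- subseqs s)
  h' t * a ^+ (size s - size t) * c ^+ (size y - size s).
have cons_part : \sum_(s <- subseqs y) \sum_(t <- subseqs (v :: s))
    h t * a ^+ (size (v :: s) - size t) * c ^+ (size (v :: y) - size (v :: s))
  = S (fun t => h (v :: t)) + a * S h.
  rewrite /S mulr_sumr -big_split /=; apply: eq_big_seq => s ys.
  rewrite big_cat big_map mulr_sumr; congr (_ + _); apply: eq_big_seq => t st.
  by rewrite subSn ?size_subseqs // exprS; ring.
have skip_part : \sum_(s <- subseqs y) \sum_(t <- subseqs s)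
    h t * a ^+ (size s - size t) * c ^+ (size (v :: y) - size s) = c * S h.
  rewrite /S mulr_sumr; apply: eq_big_seq => s ys; rewrite mulr_sumr.
  by apply: eq_bigr => t _; rewrite /= subSn ?size_subseqs // exprS; ring.
rewrite /= !big_cat !big_map /= cons_part skip_part /S !IH -addrA -mulrDl.
rewrite mulr_sumr; congr (_ + _); apply: eq_big_seq => t yt.
by rewrite subSn ?size_subseqs // exprS; ring.
Qed.

Definition wPmat (a : rat) : incfun := fun x y => a ^+ (size y - size x) * Pmat x y.

Lemma sum_perms_pred1 (F : seq nat -> rat) w N : is_perm w ->
  \sum_(n < N) \sum_(z <- perms n | z == w) F z = (size w < N)%:R * F w.
Proof.
move=> w_perm; have inner n :
    \sum_(z <- perms n | z == w) F z = ((n : nat) == size w)%:R * F w.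
  rewrite -big_filter; case: eqP => [->|nw].
    by rewrite filter_pred1_uniq ?permutations_uniq ?mem_perms ?big_seq1 ?mul1r.
  rewrite mul0r big1_seq // => z; rewrite mem_filter.
  by case/andP => _ /andP [/eqP -> /size_perms wn]; case: nw.
under eq_bigr => n _ do rewrite inner.
rewrite -mulr_suml; congr (_ * _); case: ltnP => [wN|Nw].
  rewrite (bigD1 (Ordinal wN)) //= eqxx big1 ?addr0 // => n.
  by rewrite -val_eqE /= => /negbTE ->.
by rewrite big1 // => n _; rewrite ltn_eqF // (leq_trans (ltn_ord n) Nw).
Qed.

Lemma sum_perms_Pmat (f : seq nat -> rat) y : uniq y ->
  \sum_(n < (size y).+1) \sum_(z <- perms n) f z * Pmat z y
  = \sum_(s <- subseqs y) f (std s).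
Proof.
move=> y_uniq; under eq_bigr => n _ do under eq_bigr => z _ do
  rewrite /Pmat /occ natr_count mulr_sumr.
under eq_bigr => n _ do rewrite exchange_big.
rewrite exchange_big /=; apply: eq_big_seq => s ys.
have s_uniq : uniq s := subseq_uniq (subseqs_subseq ys) y_uniq.
transitivity (\sum_(n < (size y).+1) \sum_(z <- perms n | z == std s) f z).
  apply: eq_bigr => n _; rewrite [RHS]big_mkcond.
  apply: eq_big_seq => z /perms_is_perm z_perm /=.
  by rewrite order_iso_std //; case: eqP; rewrite ?mulr0 ?mulr1.
by rewrite sum_perms_pred1 ?std_perm // size_std ltnS size_subseqs // mul1r.
Qed.

Lemma sum_wPmat_mul a c x y : uniq y ->
  \sum_(n < (size y).+1) \sum_(z <- perms n) wPmat a x z * wPmat c z y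
  = wPmat (a + c) x y.
Proof.
move=> y_uniq.
transitivity (\sum_(n < (size y).+1) \sum_(z <- perms n)
                (wPmat a x z * c ^+ (size y - size z)) * Pmat z y).
  by apply: eq_bigr => n _; apply: eq_bigr => z _; rewrite /wPmat mulrA.
rewrite sum_perms_Pmat //.
transitivity (\sum_(s <- subseqs y) \sum_(t <- subseqs s)
   (order_iso t x)%:R * a ^+ (size s - size t) * c ^+ (size y - size s)).
  apply: eq_bigr => s _; rewrite /wPmat /Pmat occ_std size_std mulrAC mulrC.
  rewrite (occ_weighted (fun n => a ^+ (size s - n) * c ^+ (size y - size s))).
  by apply: eq_bigr => t _; rewrite mulrA.
rewrite subseqs_sum /wPmat /Pmat mulrC.
by rewrite (occ_weighted (fun n => (a + c) ^+ (size y - n))).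
Qed.

Lemma wPmat_eq0 a x y : ~~ patle x y -> wPmat a x y = 0.
Proof. by rewrite /patle lt0n negbK /wPmat /Pmat => /eqP ->; rewrite mulr0. Qed.

Lemma eq_conv F F' G G' :
  {in is_perm &, F =2 F'} -> {in is_perm &, G =2 G'} ->
  {in is_perm &, conv F G =2 conv F' G'}.
Proof.
move=> FF' GG' x y x_perm y_perm; apply: eq_bigr => n _.
rewrite big_seq_cond [RHS]big_seq_cond.
apply: eq_bigr => z /andP [/perms_is_perm z_perm _].
by rewrite FF' ?GG'.
Qed.

Lemma conv_wPmat a c : {in is_perm &, conv (wPmat a) (wPmat c) =2 wPmat (a + c)}.
Proof.
move=> x y _ /is_perm_uniq y_uniq; rewrite -sum_wPmat_mul //; apply: eq_bigr => n _.
rewrite [LHS]big_mkcond; apply: eq_bigr => z _.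
case: ifP => // /negbT; rewrite negb_and.
by case/orP => /wPmat_eq0 ->; rewrite ?mul0r ?mulr0.
Qed.

Lemma Pmat_wPmat1 : Pmat =2 wPmat 1.
Proof. by move=> x y; rewrite /wPmat expr1n mul1r. Qed.

Lemma wPmat_small a x y : is_perm x -> is_perm y -> (size y <= size x)%N ->
  wPmat a x y = (x == y)%:R.
Proof.
move=> x_perm y_perm; rewrite leq_eqVlt => /orP [/eqP yx|yx].
  rewrite /wPmat /Pmat yx subnn expr0 mul1r occ_same_size //.
  by rewrite order_iso_perm // eq_sym.
rewrite /wPmat /Pmat occ_eq0 // mulr0.
by case: eqP yx => // ->; rewrite ltnn.
Qed.

Lemma idelta_wPmat0 : {in is_perm &, idelta =2 wPmat 0}.
Proof.
move=> x y x_perm y_perm; case: (leqP (size y) (size x)) => [yx|xy].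
  by rewrite wPmat_small.
rewrite /wPmat expr0n subn_eq0 leqNgt xy mul0r /idelta.
by case: eqP xy => // ->; rewrite ltnn.
Qed.

Lemma iter_conv_wPmat F a n : {in is_perm &, F =2 wPmat a} ->
  {in is_perm &, iter n (conv F) idelta =2 wPmat (a *+ n)}.
Proof.
move=> Fa; elim: n => [|n IH] x y x_perm y_perm /=; first exact: idelta_wPmat0.
by rewrite (eq_conv Fa IH) // conv_wPmat // mulrS.
Qed.

Lemma patle_size_lt x z : is_perm x -> is_perm z -> patle x z -> z != x ->
  (size x < size z)%N.
Proof.
move=> x_perm z_perm xz zx; rewrite ltn_neqAle patle_size // andbT.
apply: contra zx => /eqP xz_size; move: xz.
by rewrite /patle occ_same_size // order_iso_perm // lt0b.
Qed.

Lemma conv_offdiag F G x y : is_perm x ->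
  \sum_(n < (size y).+1)
     \sum_(z <- perms n | patle x z && patle z y && (z != x)) F x z * G z y
  = conv F G x y - (patle x y)%:R * (F x x * G x y).
Proof.
move=> x_perm; apply/eqP; rewrite eq_sym subr_eq; apply/eqP.
have split_diag n : \sum_(z <- perms n | patle x z && patle z y) F x z * G z y
  = \sum_(z <- perms n | patle x z && patle z y && (z != x)) F x z * G z y
  + \sum_(z <- perms n | z == x)
      (if patle x z && patle z y then F x z * G z y else 0).
  rewrite (bigID (fun z => z != x)) /=; congr (_ + _).
  by rewrite -big_mkcondr; apply: eq_bigl => z; rewrite negbK andbC.
rewrite /conv; under eq_bigr => n _ do rewrite split_diag.
rewrite big_split /= sum_perms_pred1 // {2 3}/patle occ_id /=.
by case: (boolP (patle x y)) => [/patle_size xy|_]; rewrite ?ltnS ?xy ?mul0r ?mulr0.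
Qed.

Lemma inv_aux_Pmat k x y : is_perm x -> is_perm y -> (size y - size x <= k)%N ->
  inv_aux Pmat k x y = wPmat (-1) x y.
Proof.
have Pmat_id z : Pmat z z = 1 by rewrite /Pmat occ_id.
have wPmat_id z : wPmat (-1) z z = 1 by rewrite /wPmat subnn expr0 mul1r Pmat_id.
elim: k x => [|k IH] x x_perm y_perm yx /=;
  case: eqP => [<-|/eqP xy]; rewrite ?Pmat_id ?invr1 ?wPmat_id //.
  by rewrite wPmat_small ?(negbTE xy) //; lia.
have recursion : \sum_(n < (size y).+1)
    \sum_(z <- perms n | patle x z && patle z y && (z != x))
       Pmat x z * inv_aux Pmat k z y
  = \sum_(n < (size y).+1)
    \sum_(z <- perms n | patle x z && patle z y && (z != x))
       Pmat x z * wPmat (-1) z y.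
  apply: eq_bigr => n _; rewrite big_seq_cond [RHS]big_seq_cond.
  apply: eq_bigr => z /andP [/perms_is_perm z_perm /andP [/andP [xz _] zx]].
  by rewrite IH //; have := patle_size_lt x_perm z_perm xz zx; lia.
have conv_Pmat_inv : conv Pmat (wPmat (-1)) x y = 0.
  rewrite (eq_conv (in2W Pmat_wPmat1) (in2W (fun _ _ => erefl))) // conv_wPmat //.
  by rewrite subrr -idelta_wPmat0 // /idelta (negbTE xy).
rewrite mulN1r recursion conv_offdiag // conv_Pmat_inv Pmat_id mul1r sub0r opprK.
by case: (boolP (patle x y)) => [_|/wPmat_eq0 ->]; rewrite ?mul1r ?mulr0.
Qed.

Lemma inv_Pmat : {in is_perm &, Defs.inv Pmat =2 wPmat (-1)}.
Proof. by move=> x y x_perm y_perm; apply: inv_aux_Pmat. Qed.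

Theorem mainTheorem6 (sigma pi : seq nat) (d : int) :
  is_perm sigma -> is_perm pi ->
  ipow Pmat d sigma pi = (d%:~R : rat) ^+ (size pi - size sigma) * Pmat sigma pi.
Proof.
move=> sigma_perm pi_perm; case: d => n; rewrite /ipow.
  by rewrite (iter_conv_wPmat n (in2W Pmat_wPmat1)).
by rewrite (iter_conv_wPmat n.+1 inv_Pmat) // NegzE mulrNz mulNrn.
Qed.
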